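(* Let $k\ge1$, $G=(V,E)$ an inductively $k$-independent graph with $k$-independence ordering $v_1,\dots,v_n$, $f:2^V\to\mathbb{R}_{\ge0}$ monotone submodular with $f(\emptyset)=0$, and $\beta>0$. Let $S_{\mathrm{end}}$ and $w_1,\dots,w_n$ be produced by Phase 1 of algorithm PD-MON (described in the context). Then \[ f(S_{\mathrm{end}})\le\frac{1+\beta}{\beta}\sum_{i=1}^n w_i. \]
   Context: $N(v)$ is the neighbourhood of $v$ (excluding $v$); $G$ is inductively $k$-independent with $k$-independence ordering $v_1,\dots,v_n$ if for every $i$, $G[N(v_i)\cap\{v_i,\dots,v_n\}]$ has no independent set of size more than $k$. For $S\subseteq V$, $f_S(v)=f(S\cup\{v\})-f(S)$. Phase 1 of algorithm PD-MON (parameter $\beta>0$): start with $S=\emptyset$ and $w_1=\dots=w_n=0$. For $i=1,\dots,n$: let $C_i=N(v_i)\cap S$ for the current $S$; if $f_S(v_i)>(1+\beta)\sum_{v_j\in C_i}w_j$, set $w_i=f_S(v_i)-\sum_{v_j\in C_i}w_j$ (with $S$ the set before insertion) and add $v_i$ to $S$; otherwise leave $w_i=0$. $S_{\mathrm{end}}$ is $S$ at the end of this phase. *)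

From HB Require Import structures.
From mathcomp Require Import all_boot all_order all_algebra.
Set Implicit Arguments. Unset Strict Implicit. Unset Printing Implicit Defensive.
Import Order.TTheory GRing.Theory Num.Theory.
Local Open Scope ring_scope.

(* Vertices are 'I_n; the k-independence ordering v_1,...,v_n is the natural
   order 0 < 1 < ... < n-1 of 'I_n.  A simple graph is a symmetric,
   irreflexive relation e (e u v = "uv is an edge"). *)

Definition simple_graph (n : nat) (e : rel 'I_n) : Prop :=
  symmetric e /\ irreflexive e.

Definition independent (n : nat) (e : rel 'I_n) (I : {set 'I_n}) : Prop :=
  forall u v, u \in I -> v \in I -> ~~ e u v.

Definition later_nbhd (n : nat) (e : rel 'I_n) (i : 'I_n) : {set 'I_n} :=
  [set j | e i j & (i <= j)%N].

Definition inductively_k_independent (n k : nat) (e : rel 'I_n) : Prop :=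
  forall (i : 'I_n) (I : {set 'I_n}),
    I \subset later_nbhd e i -> independent e I -> (#|I| <= k)%N.

Definition monotone_set_fun (R : realFieldType) (n : nat)
  (f : {set 'I_n} -> R) : Prop :=
  forall A B : {set 'I_n}, A \subset B -> f A <= f B.

Definition submodular (R : realFieldType) (n : nat)
  (f : {set 'I_n} -> R) : Prop :=
  forall A B : {set 'I_n}, f (A :|: B) + f (A :&: B) <= f A + f B.

Definition marginal (R : realFieldType) (n : nat)
  (f : {set 'I_n} -> R) (S : {set 'I_n}) (v : 'I_n) : R :=
  f (v |: S) - f S.

Definition pdmon_step (R : realFieldType) (n : nat) (e : rel 'I_n)
  (f : {set 'I_n} -> R) (beta : R)
  (st : {set 'I_n} * {ffun 'I_n -> R}) (i : 'I_n)
  : {set 'I_n} * {ffun 'I_n -> R} :=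
  let S := st.1 in
  let w := st.2 in
  let C := [set j in S | e i j] in
  let sw := \sum_(j in C) w j in
  let m := marginal f S i in
  if (1 + beta) * sw < m
  then (i |: S, [ffun j => if j == i then m - sw else w j])
  else (S, w).

Definition pdmon_phase1 (R : realFieldType) (n : nat) (e : rel 'I_n)
  (f : {set 'I_n} -> R) (beta : R) : {set 'I_n} * {ffun 'I_n -> R} :=
  foldl (pdmon_step e f beta) (set0, [ffun => 0]) (enum 'I_n).

From HB Require Import structures.
From mathcomp Require Import all_boot all_order all_algebra.
From mathcomp Require Import ring lra.
Set Implicit Arguments. Unset Strict Implicit. Unset Printing Implicit Defensive.
Import Order.TTheory GRing.Theory Num.Theory.
Local Open Scope ring_scope.

(* Invariant: f(S) <= (1+beta)/beta * sum w along the run.  When v_i is added,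
   f(S) grows by m = f_S(v_i) while sum w grows by w_i = m - sw (w_i was 0),
   and m > (1+beta) sw gives m <= (1+beta)/beta * (m - sw). *)

Lemma ler_pdivrMsub (R : realFieldType) (beta s m : R) :
  0 < beta -> (1 + beta) * s < m -> m <= (1 + beta) / beta * (m - s).
Proof.
move=> beta_gt0 lt_sm; rewrite -subr_ge0.
have -> : (1 + beta) / beta * (m - s) - m = (m - (1 + beta) * s) / beta.
  by field; rewrite gt_eqF.
by rewrite divr_ge0 // ?subr_ge0 ltW.
Qed.

Section Phase1Bound.

Variables (R : realFieldType) (n : nat) (e : rel 'I_n).
Variables (f : {set 'I_n} -> R) (beta : R).
Hypothesis beta_gt0 : 0 < beta.
Implicit Types (st : {set 'I_n} * {ffun 'I_n -> R}) (i j : 'I_n) (s : seq 'I_n).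

Definition dual_bound st : Prop :=
  f st.1 <= (1 + beta) / beta * \sum_(i < n) st.2 i.

Lemma pdmon_step_weight_other st i j :
  j != i -> (pdmon_step e f beta st i).2 j = st.2 j.
Proof.
by move=> /negPf neq_ji; rewrite /pdmon_step; case: ifP => //= _; rewrite ffunE neq_ji.
Qed.

Lemma dual_bound_pdmon_step st i :
  st.2 i = 0 -> dual_bound st -> dual_bound (pdmon_step e f beta st i).
Proof.
rewrite /dual_bound /pdmon_step => w_i0 bound_st; case: ifP => // lt_sw_m /=.
set sw := \sum_(j in _) _ in lt_sw_m *; set m := marginal f st.1 i in lt_sw_m *.
move: bound_st; rewrite (bigD1 i) //= w_i0 add0r => bound_st.
rewrite (bigD1 i) //= ffunE eqxx.
rewrite (eq_bigr (fun j => st.2 j)) => [|j /negPf neq_ji]; last by rewrite ffunE neq_ji.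
have f_add : f (i |: st.1) = f st.1 + m by rewrite /m /marginal; ring.
have := ler_pdivrMsub beta_gt0 lt_sw_m.
rewrite f_add mulrDr; lra.
Qed.

Lemma dual_bound_foldl_pdmon_step st s :
  uniq s -> {in s, forall j, st.2 j = 0} -> dual_bound st ->
  dual_bound (foldl (pdmon_step e f beta) st s).
Proof.
elim: s st => [|i s IHs] st //= /andP[i_notin_s uniq_s] w_s0 bound_st.
apply: IHs => // [j j_in_s|].
  rewrite pdmon_step_weight_other; first by rewrite w_s0 // inE j_in_s orbT.
  by apply: contraNneq i_notin_s => <-.
by apply: dual_bound_pdmon_step => //; rewrite w_s0 // mem_head.
Qed.

End Phase1Bound.

Theorem lemma4 (R : realFieldType) (n k : nat) (e : rel 'I_n)
  (f : {set 'I_n} -> R) (beta : R) :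
  (1 <= k)%N ->
  simple_graph e ->
  inductively_k_independent k e ->
  (forall A, 0 <= f A) ->
  monotone_set_fun f ->
  submodular f ->
  f set0 = 0 ->
  0 < beta ->
  let: (S_end, w) := pdmon_phase1 e f beta in
  f S_end <= (1 + beta) / beta * \sum_(i < n) w i.
Proof.
move=> _ _ _ _ _ _ f0 beta_gt0.
have bound_end : dual_bound f beta (pdmon_phase1 e f beta).
  apply: dual_bound_foldl_pdmon_step => //; first exact: enum_uniq.
    by move=> j _; rewrite ffunE.
  by rewrite /dual_bound f0 big1 ?mulr0 // => i _; rewrite ffunE.
by case: pdmon_phase1 bound_end.
Qed.
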